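(* If $T$ is a tree, then $\gamma_{\rm i}(T)=\alpha(T)$.
   Context: $\alpha(T)$ is the independence number. Indicated domination game on a graph $G$: two players, Dominator and Staller, alternate. In each round Dominator indicates a vertex $v$ not yet dominated by the vertices previously selected by Staller (a vertex dominates itself and its neighbors), and Staller must select a vertex of the closed neighborhood $N[v]$, adding it to a set $D$. The game ends when $D$ is a dominating set of $G$. Dominator wants to minimize $|D|$ and Staller to maximize it; the size of $D$ under optimal play of both is the indicated domination number $\gamma_{\rm i}(G)$. *)

From mathcomp Require Import all_boot.
Set Implicit Arguments. Unset Strict Implicit. Unset Printing Implicit Defensive.

Section Graph.
Variables (T : finType) (e : rel T).

Definition cnbh (v : T) : {set T} := [set u | (u == v) || e v u].

Definition dominated (D : {set T}) (v : T) : bool := [exists u in D, u \in cnbh v].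

Definition dominating (D : {set T}) : bool := [forall v, dominated D v].

(* Indicated domination game: value of the game from position D (the set of
   vertices selected by Staller so far), with fuel n.  Dominator (min) indicates
   an undominated vertex v, Staller (max) selects u in N[v]; each selection
   counts 1.  The game ends when D is dominating.  The index set of the min is
   nonempty whenever D is not dominating, and every selected u is new (u \in D
   would dominate v), so fuel #|T|.+1 suffices and the default #|T| of the min
   never matters (the game lasts at most #|T| rounds). *)
Fixpoint igame (n : nat) (D : {set T}) : nat :=
  match n with
  | 0 => 0
  | n'.+1 =>
      if dominating D then 0
      else \big[minn/#|T|]_(v | ~~ dominated D v)
             \max_(u in cnbh v) (igame n' (u |: D)).+1
  end.

Definition indicated_domination_number : nat := igame #|T|.+1 set0.

Definition independent (S : {set T}) : bool :=
  [forall x in S, forall y in S, ~~ e x y].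

Definition independence_number : nat :=
  \max_(S : {set T} | independent S) #|S|.

Definition simple_graph : Prop := symmetric e /\ irreflexive e.

Definition connected_graph : Prop := forall x y : T, connect e x y.

Definition acyclic_graph : Prop :=
  forall s : seq T, uniq s -> 2 < size s -> ~~ cycle e s.

Definition is_tree : Prop := simple_graph /\ connected_graph /\ acyclic_graph.

End Graph.

(** Staller can answer every indication inside a fixed maximum independent set
    [S]; such an [S] is dominating, so this works in any graph and forces
    [#|S|] selections.

    Conversely, in a forest let [W] be the set of undominated vertices.
    Dominator keeps the invariant that every component of the subforest
    induced by [W] contains at most one vertex with a neighbour outside [W].
    Under this invariant he can always indicate a vertex [v] such that every
    answer [u] in [N[v]] preserves it and lowers the independence number of
    the subforest: a [W]-neighbour of a boundary vertex [c] if [c] has one, [c]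
    itself if it is isolated in [W], and any vertex of [W] if there is no
    boundary vertex at all.  The invariant survives because, in a forest, a
    connected vertex set has at most one neighbour in each component of a
    disjoint vertex set. *)

From mathcomp Require Import all_boot order.
Set Implicit Arguments. Unset Strict Implicit. Unset Printing Implicit Defensive.

Section Graph.
Variables (T : finType) (e : rel T).
Hypotheses (esym : symmetric e) (eirr : irreflexive e).
Implicit Types (A B D R S W : {set T}) (b c t u v x y z : T).

Definition undominated (D : {set T}) : {set T} := [set v | ~~ dominated e D v].

Definition alpha_in (W : {set T}) : nat :=
  \max_(S : {set T} | independent e S && (S \subset W)) #|S|.

Lemma cnbh_id v : v \in cnbh e v.
Proof. by rewrite inE eqxx. Qed.

Lemma cnbhC u v : (u \in cnbh e v) = (v \in cnbh e u).
Proof. by rewrite !inE eq_sym esym. Qed.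

Lemma dominatedU D u v :
  dominated e (u |: D) v = (u \in cnbh e v) || dominated e D v.
Proof.
apply/existsP/orP => [[w /andP[]]|].
  rewrite in_setU1 => /predU1P[-> | wD wv]; first by left.
  by right; apply/existsP; exists w; rewrite wD.
case=> [uv | /existsP[w /andP[wD wv]]]; first by exists u; rewrite setU11.
by exists w; rewrite in_setU1 wD orbT.
Qed.

Lemma undominatedU D u : undominated (u |: D) = undominated D :\: cnbh e u.
Proof.
by apply/setP => v; rewrite in_setD !inE dominatedU negb_or cnbhC inE.
Qed.

Lemma undominated0 : undominated set0 = [set: T].
Proof. by apply/setP => v; rewrite !inE; apply/existsP => -[u]; rewrite inE. Qed.

Lemma alpha_inP W :
  exists2 S, independent e S && (S \subset W) & #|S| = alpha_in W.
Proof.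
have indep0 : independent e set0 by apply/forallP => x; rewrite inE.
have [|S SW eS] := eq_bigmax_cond (fun S : {set T} => #|S|)
  (A := [pred S : {set T} | independent e S && (S \subset W)]).
  by apply/card_gt0P; exists set0; rewrite inE indep0 sub0set.
by exists S; rewrite // /alpha_in eS.
Qed.

Lemma alpha_in_setT : alpha_in [set: T] = independence_number e.
Proof. by apply: eq_bigl => S; rewrite subsetT andbT. Qed.

Lemma independentU1 S c :
  independent e S -> (forall y, y \in S -> ~~ e c y) -> independent e (c |: S).
Proof.
move=> /forallP iS cS; apply/forallP => x; apply/implyP.
rewrite in_setU1 => /predU1P[-> | xS]; apply/forallP => y; apply/implyP;
  rewrite in_setU1 => /predU1P[-> | yS]; rewrite ?eirr ?cS //.
- by rewrite esym cS.
- by move/implyP: (iS x) => /(_ xS)/forallP/(_ y)/implyP/(_ yS).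
Qed.

Lemma alpha_in_ltD W W' c : W' \subset W -> c \in W -> c \notin W' ->
  (forall y, y \in W' -> ~~ e c y) -> alpha_in W' < alpha_in W.
Proof.
move=> sW'W cW cW' cW'0.
have [S /andP[iS sSW'] <-] := alpha_inP W'.
have cS : c \notin S by apply: contra cW' => /(subsetP sSW').
apply: (@leq_trans #|c |: S|); first by rewrite cardsU1 cS.
apply: (@leq_bigmax_cond _ (fun S => independent e S && (S \subset W))).
rewrite independentU1 //=; last by move=> y /(subsetP sSW'); apply: cW'0.
by rewrite subUset sub1set cW (subset_trans sSW' sW'W).
Qed.

Lemma max_independent_dominating S :
  independent e S -> #|S| = independence_number e -> dominating e S.
Proof.
move=> iS cardS; apply/forallP => v; apply: contraT => ndom_v.
have vS : v \notin S.
  by apply: contra ndom_v => vS; apply/existsP; exists v; rewrite vS cnbh_id.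
have : #|v |: S| <= independence_number e.
  apply: (@leq_bigmax_cond _ (independent e) (fun S => #|S|)).
  apply: independentU1 => // y yS; apply: contra ndom_v => evy.
  by apply/existsP; exists y; rewrite yS inE evy orbT.
by rewrite -cardS cardsU1 vS ltnn.
Qed.

Lemma igame_ge_card S n D : independent e S -> dominating e S ->
  D \subset S -> #|S :\: D| < n -> #|S :\: D| <= igame e n D.
Proof.
move=> iS domS; elim: n D => [|n IH] D sDS //= ltSn.
case: ifP => [/forallP domD | _].
  rewrite leqn0 cards_eq0; apply/eqP/setP => s; rewrite in_set0 in_setD.
  apply/negP => /andP[sD sS]; have /existsP[u /andP[uD]] := domD s.
  rewrite inE => /predU1P[us | esu]; first by rewrite -us uD in sD.
  move/forallP: iS => /(_ s); rewrite sS /= => /forallP/(_ u).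
  by rewrite (subsetP sDS u uD) esu.
apply: (big_ind (fun m => #|S :\: D| <= m)); first exact: max_card.
  by move=> a b ha hb; rewrite leq_min ha hb.
move=> v vD; move/forallP: domS => /(_ v)/existsP[s /andP[sS sv]].
have sSD : s \in S :\: D.
  rewrite in_setD sS andbT; apply: contra vD => sD.
  by apply/existsP; exists s; rewrite sD.
apply: leq_trans (@leq_bigmax_cond _ (mem (cnbh e v))
  (fun u => (igame e n (u |: D)).+1) s sv).
have cardSD : #|S :\: D| = #|S :\: (s |: D)|.+1.
  by rewrite (cardsD1 s) sSD setDDl setUC.
by rewrite cardSD ltnS IH // -?cardSD // subUset sub1set sS.
Qed.

Lemma independence_number_le_indicated :
  independence_number e <= indicated_domination_number e.
Proof.
have [S /andP[iS _]] := alpha_inP [set: T]; rewrite alpha_in_setT => cardS.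
have := @igame_ge_card S #|T|.+1 set0 iS (max_independent_dominating iS cardS).
by rewrite setD0 ltnS max_card sub0set -cardS; apply.
Qed.

Section Forest.
Hypothesis eacyc : acyclic_graph e.

Definition induced W : rel T := [rel x y in W | e x y].

Definition connected_in W : Prop :=
  forall x y, x \in W -> y \in W -> connect (induced W) x y.

Definition boundary W x : bool := [exists t, (t \notin W) && e x t].

Definition single_boundary W : Prop :=
  forall x y, x \in W -> y \in W -> connect (induced W) x y ->
    boundary W x -> boundary W y -> x = y.

Definition safe_indication W v : Prop :=
  forall u, u \in cnbh e v ->
    single_boundary (W :\: cnbh e u) /\ alpha_in (W :\: cnbh e u) < alpha_in W.

Lemma induced_edge W x y : x \in W -> y \in W -> e x y -> connect (induced W) x y.
Proof. by move=> xW yW exy; apply: connect1; rewrite /induced /= xW yW. Qed.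

Lemma connect_inducedC W x y :
  connect (induced W) x y = connect (induced W) y x.
Proof.
have symW : symmetric (induced W).
  by move=> a b; rewrite /induced /= esym [(a \in W) && _]andbC.
exact: sym_connect_sym.
Qed.

Lemma connect_inducedS W W' x y :
  W' \subset W -> connect (induced W') x y -> connect (induced W) x y.
Proof.
move=> sW'W; apply: connect_sub => a b /andP[/andP[aW' bW'] eab].
by apply: induced_edge; rewrite ?(subsetP sW'W).
Qed.

Lemma induced_path_sub W x p :
  x \in W -> path (induced W) x p -> {subset x :: p <= W}.
Proof.
elim: p x => [|y p IH] x xW /=; first by move=> _ z; rewrite inE => /eqP ->.
case/andP=> /andP[/andP[_ yW] _] yp z; rewrite inE => /predU1P[-> // |].
exact: IH.
Qed.

Lemma connected_in_set1 x : connected_in [set x].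
Proof. by move=> a b; rewrite !inE => /eqP -> /eqP ->; apply: connect0. Qed.

Lemma connected_in_cnbh u : connected_in (cnbh e u).
Proof.
have to_u b : b \in cnbh e u -> connect (induced (cnbh e u)) b u.
  rewrite inE => /predU1P[-> | eub]; first exact: connect0.
  by apply: induced_edge; rewrite ?cnbh_id ?inE ?eub ?orbT // esym.
move=> a b /to_u au /to_u bu.
by apply: connect_trans au _; rewrite connect_inducedC.
Qed.

Lemma acyclic_neighbour_unique A B x y b b' :
  connected_in B -> [disjoint A & B] -> x \in A -> connect (induced A) x y ->
  b \in B -> b' \in B -> e x b -> e y b' -> x = y.
Proof.
move=> connB dAB xA /connectP[p0 p0A ->] bB b'B.
have /connectP[q0 q0B ->] := connB b' b b'B bB.
case/shortenP: p0A => p pA up _; case/shortenP: q0B => q qB uq _ exb eyb'.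
case: (eqVneq x (last x p)) => // nxy; exfalso.
(* The cycle goes from [x] to [y] inside [A], then from [b'] to [b] inside [B]. *)
have uniq_s : uniq (x :: p ++ b' :: q).
  rewrite -cat_cons cat_uniq up uq andbT; apply/hasPn => z zq.
  have zB := induced_path_sub b'B qB zq.
  by apply/negP => /(induced_path_sub xA pA); rewrite (disjointFl dAB zB).
have size_s : 2 < size (x :: p ++ b' :: q).
  have : 0 < size p by rewrite lt0n size_eq0; apply: contraNneq nxy => ->.
  by move=> sp; rewrite /= size_cat /= addnS !ltnS (leq_trans sp) ?leq_addr.
apply: (negP (eacyc uniq_s size_s)).
rewrite /= rcons_cat cat_path rcons_path /= eyb'.
have induced_sub W : subrel (induced W) e by move=> ? ? /andP[].
by rewrite (sub_path (induced_sub A) pA) (sub_path (induced_sub B) qB) esym.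
Qed.

Lemma boundaryD W R z :
  boundary (W :\: R) z -> boundary W z \/ exists2 r, r \in W :&: R & e z r.
Proof.
case/existsP => t /andP[tW' ezt]; have [tW | tW] := boolP (t \in W).
  by right; exists t; rewrite // inE tW; move: tW'; rewrite in_setD tW andbT negbK.
by left; apply/existsP; exists t; rewrite tW.
Qed.

Lemma disjoint_setD_cnbh W u : [disjoint W :\: cnbh e u & cnbh e u].
Proof. by rewrite disjoints_subset setDE subsetIr. Qed.

Lemma single_boundaryD_in W u : single_boundary W -> u \in W ->
  (forall z, z \in W -> connect (induced W) u z -> boundary W z ->
     z \notin cnbh e u -> exists2 b, b \in cnbh e u & e z b) ->
  single_boundary (W :\: cnbh e u).
Proof.
move=> K uW near x y xW' yW' cxy bdx bdy.
have sW : W :\: cnbh e u \subset W := subsetDl W (cnbh e u).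
have [xW yW] := (subsetP sW x xW', subsetP sW y yW').
have cxyW := connect_inducedS sW cxy.
have [/andP[bWx bWy] | /nandP nbW] := boolP (boundary W x && boundary W y).
  exact: K.
have conn_u z : z \in W :\: cnbh e u -> boundary (W :\: cnbh e u) z ->
    ~~ boundary W z -> connect (induced W) u z.
  move=> /(subsetP sW) zW /boundaryD[-> // | [r /setIP[rW]]].
  rewrite inE => /predU1P[-> ezu _ | eur ezr _].
    by rewrite (induced_edge uW zW) // esym.
  apply: connect_trans (induced_edge uW rW eur) (induced_edge rW zW _).
  by rewrite esym.
have [cux cuy] : connect (induced W) u x /\ connect (induced W) u y.
  case: nbW => [/(conn_u x xW' bdx) cux | /(conn_u y yW' bdy) cuy].
    by split; last exact: connect_trans cux cxyW.
  by split; first by apply: connect_trans cuy _; rewrite connect_inducedC.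
have nbr z : z \in W :\: cnbh e u -> connect (induced W) u z ->
    boundary (W :\: cnbh e u) z -> exists2 b, b \in cnbh e u & e z b.
  move=> zW' cuz /boundaryD[bz | [r /setIP[_ ru] ezr]]; last by exists r.
  by move: zW'; rewrite in_setD => /andP[zu zW]; apply: near.
have [b bu exb] := nbr x xW' cux bdx.
have [b' b'u eyb'] := nbr y yW' cuy bdy.
exact: (acyclic_neighbour_unique (@connected_in_cnbh u) (@disjoint_setD_cnbh W u)
  xW' cxy bu b'u exb eyb').
Qed.

Lemma single_boundaryD_out W u : single_boundary W -> u \notin W ->
  single_boundary (W :\: cnbh e u).
Proof.
move=> K uW x y xW' yW' cxy bdx bdy.
have sW : W :\: cnbh e u \subset W := subsetDl W (cnbh e u).
have [xW yW] := (subsetP sW x xW', subsetP sW y yW').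
have cxyW := connect_inducedS sW cxy.
have [/andP[bWx bWy] | /nandP nbW] := boolP (boundary W x && boundary W y).
  exact: K.
have bd_cnbh t : t \in W -> t \in cnbh e u -> boundary W t.
  move=> tW; rewrite inE => /predU1P[tu | eut]; first by rewrite -tu tW in uW.
  by apply/existsP; exists u; rewrite uW esym.
have [r /setIP[rW ru] exyr] : exists2 r, r \in W :&: cnbh e u & e x r || e y r.
  case: nbW => [nbx | nby].
    case: (boundaryD bdx) nbx => [-> // | [r rWu exr] _].
    by exists r; rewrite ?exr.
  case: (boundaryD bdy) nby => [-> // | [r rWu eyr] _].
  by exists r; rewrite ?eyr ?orbT.
have bdr := bd_cnbh r rW ru.
have rW' : r \notin W :\: cnbh e u by rewrite in_setD ru.
have to_r z : z \in W :\: cnbh e u -> connect (induced W) z r ->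
    boundary (W :\: cnbh e u) z -> e z r.
  move=> zW' czr /boundaryD[bz | [t /setIP[tW tu] ezt]].
    by rewrite -(K z r (subsetP sW z zW') rW czr bz bdr) zW' in rW'.
  have bdt := bd_cnbh t tW tu.
  have ctr : connect (induced W) t r.
    by apply: connect_trans czr; rewrite induced_edge // ?(subsetP sW z zW') // esym.
  by rewrite -(K t r tW rW ctr bdt bdr).
have [cxr cyr] : connect (induced W) x r /\ connect (induced W) y r.
  case/orP: exyr => [/(induced_edge xW rW) cxr | /(induced_edge yW rW) cyr].
    by split; last by apply: connect_trans cxr; rewrite connect_inducedC.
  by split; first exact: connect_trans cxyW cyr.
have dW'r : [disjoint W :\: cnbh e u & [set r]] by rewrite disjoint_sym disjoints1.
exact: (acyclic_neighbour_unique (@connected_in_set1 r) dW'r xW' cxy (set11 r)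
  (set11 r) (to_r x xW' cxr bdx) (to_r y yW' cyr bdy)).
Qed.

Lemma safe_inner W v : single_boundary W -> v \in W -> ~~ boundary W v ->
  (forall z, z \in W -> connect (induced W) v z -> boundary W z -> e z v) ->
  safe_indication W v.
Proof.
move=> K vW bdv near u uv.
have [uW cvu] : u \in W /\ connect (induced W) v u.
  move: uv; rewrite inE => /predU1P[-> | evu]; first by split; last exact: connect0.
  have uW : u \in W.
    by apply: contraNT bdv => uW; apply/existsP; exists u; rewrite uW evu.
  by split; last exact: induced_edge.
split.
  apply: single_boundaryD_in => // z zW cuz bdz _.
  by exists v; [rewrite cnbhC | apply: near; rewrite // (connect_trans cvu cuz)].
apply: (alpha_in_ltD (subsetDl _ _) uW); first by rewrite in_setD cnbh_id.
by move=> y; rewrite in_setD inE negb_or => /andP[/andP[_ euy] _].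
Qed.

Lemma safe_isolated W c : single_boundary W -> c \in W ->
  (forall y, y \in W -> ~~ e c y) -> safe_indication W c.
Proof.
move=> K cW isoc u uc; split; last first.
  apply: (alpha_in_ltD (subsetDl _ _) cW); first by rewrite in_setD cnbhC uc.
  by move=> y /setDP[yW _]; apply: isoc.
have [uW | uW] := boolP (u \in W); last exact: single_boundaryD_out.
have -> : u = c.
  by move: uc; rewrite inE => /predU1P[// | ecu]; have := isoc u uW; rewrite ecu.
apply: single_boundaryD_in => // z zW /connectP[[|t p] /= ctp ->].
  by move=> _ /negP[]; apply: cnbh_id.
by case/andP: ctp => /andP[/andP[_ tW] ect]; rewrite (negbTE (isoc t tW)) in ect.
Qed.

Lemma exists_safe_indication W w0 : single_boundary W -> w0 \in W ->
  exists2 v, v \in W & safe_indication W v.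
Proof.
move=> K w0W.
have [c /andP[cW bdc] | nobd] := pickP [pred c | (c \in W) && boundary W c].
  have [a /andP[aW eca] | isoc] := pickP [pred a | (a \in W) && e c a].
    have cac : connect (induced W) a c by rewrite induced_edge // esym.
    exists a => //; apply: safe_inner => //.
      by apply: contraTN eca => bda; rewrite (K a c) ?eirr.
    move=> z zW caz bdz; have czc : connect (induced W) z c.
      by apply: connect_trans cac; rewrite connect_inducedC.
    by rewrite (K z c zW cW czc bdz bdc).
  exists c => //; apply: safe_isolated => // y yW.
  by move: (isoc y); rewrite /= yW /= => ->.
exists w0 => //; apply: safe_inner => //.
  by move: (nobd w0); rewrite /= w0W /= => ->.
by move=> z zW _ bdz; move: (nobd z); rewrite /= zW bdz.
Qed.

Lemma igame_le_alpha_in n D :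
  single_boundary (undominated D) -> igame e n D <= alpha_in (undominated D).
Proof.
elim: n D => [|n IH] D K //=; case: ifP => // /negbT.
rewrite negb_forall => /existsP[w0 w0D].
have w0D' : w0 \in undominated D by rewrite inE.
have [v vD safe_v] := exists_safe_indication K w0D'.
apply: (@leq_trans (\max_(u in cnbh e v) (igame e n (u |: D)).+1)).
  rewrite -minEnat; apply: (Order.TotalTheory.bigmin_le_cond #|T|).
  by rewrite inE in vD.
apply/bigmax_leqP => u uv; have [K' lt_alpha] := safe_v u uv.
by rewrite -undominatedU in K' lt_alpha; apply: leq_ltn_trans (IH _ K') lt_alpha.
Qed.

Lemma indicated_le_independence_number :
  indicated_domination_number e <= independence_number e.
Proof.
rewrite /indicated_domination_number -alpha_in_setT -undominated0.
apply: igame_le_alpha_in; rewrite undominated0 => x y _ _ _ /existsP[t].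
by rewrite inE.
Qed.

End Forest.

End Graph.

Theorem theorem5p2 (T : finType) (e : rel T) :
  is_tree e -> indicated_domination_number e = independence_number e.
Proof.
move=> [[esym eirr] [_ eacyc]]; apply/eqP; rewrite eqn_leq.
by rewrite indicated_le_independence_number // independence_number_le_indicated.
Qed.
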